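(* Let $X$ be a finite simplicial complex whose vertices carry a labelling by $\{1,\dots,n\}$, and suppose a second labelling is given; let $\sigma:\{1,\dots,n\}\to\{1,\dots,n\}$ be the permutation such that the vertex with label $i$ in the first labelling has label $\sigma(i)$ in the second. Let $B_d$ and $\tilde B_d$ be the matrices of the boundary maps induced by the first and second labelling, respectively. Then for all maps $F:C_d(X)\to C_d(X)$ and $H:C_{d-1}(X)\to C_{d-1}(X)$ that are componentwise with odd components, $$T_\sigma^{d-1}\circ B_dFB_d^\intercal=\tilde B_dF\tilde B_d^\intercal\circ T_\sigma^{d-1},\qquad T_\sigma^{d}\circ B_d^\intercal HB_d=\tilde B_d^\intercal H\tilde B_d\circ T_\sigma^{d}.$$ In particular, a different choice of labelling gives conjugate vector fields.
   Context: A finite simplicial complex $X$ on a vertex set is a collection of nonempty subsets of the vertex set closed under taking nonempty subsets; $X_d$ is the set of its simplices with $d+1$ vertices. $C_d(X)$ is the real vector space with basis $X_d$ (ordered in a fixed way, independent of labelling) and inner product making $X_d$ orthonormal. Given a labelling of the vertices by $\{1,\dots,n\}$, a $d$-simplex whose vertices have labels $i_0<\dots<i_d$ is written $[i_0,\dots,i_d]$, and the boundary map is $\partial_d[i_0,\dots,i_d]=\sum_{k=0}^d(-1)^k[i_0,\dots,\widehat{i_k},\dots,i_d]$ (label $i_k$ omitted); its matrix in the bases $X_d,X_{d-1}$ is the boundary matrix of that labelling. For a set $A=\{i_0<\dots<i_d\}\subseteq\{1,\dots,n\}$ and a permutation $\sigma$, $\operatorname{sgn}(A,\sigma)=\operatorname{sgn}(\tau)$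 where $\tau$ is the unique permutation of $\{0,\dots,d\}$ with $\sigma(i_{\tau(0)})<\dots<\sigma(i_{\tau(d)})$. $T_\sigma^d:C_d(X)\to C_d(X)$ is the diagonal linear map with $(T^d_\sigma x)_s=\operatorname{sgn}(A_s,\sigma)x_s$, where $A_s$ is the set of labels of $s$ in the first labelling. A map $F:C_d(X)\to C_d(X)$ is componentwise with odd components if $(F(x))_s=F_s(x_s)$ for each $s\in X_d$ with each $F_s:\mathbb{R}\to\mathbb{R}$ odd. *)

From HB Require Import structures.
From mathcomp Require Import all_boot all_order all_algebra all_fingroup.
Set Implicit Arguments. Unset Strict Implicit. Unset Printing Implicit Defensive.
Import Order.TTheory GRing.Theory Num.Theory.
Local Open Scope ring_scope.

(* Vertices are identified with their labels in the FIRST labelling: 'I_n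
   (0-based stand-in for {1,...,n}; only the order matters). *)

Definition is_complex (n : nat) (X : {set {set 'I_n}}) : Prop :=
  set0 \notin X /\
  (forall s t : {set 'I_n}, s \in X -> t \subset s -> t != set0 -> t \in X).

Definition simp (n : nat) (X : {set {set 'I_n}}) (d : nat) :=
  {s : {set 'I_n} | (s \in X) && (#|s| == d.+1)%N}.

Definition chain (R : realFieldType) (n : nat) (X : {set {set 'I_n}}) (d : nat) :=
  {ffun simp X d -> R}.

(* Boundary matrix entry of the labelling lab (lab v = label of vertex v),
   from C_{d+1} to C_d: for s = [i_0,...,i_{d+1}] (labels sorted) and t the
   face obtained by omitting the vertex v whose label is i_k, the entry is
   (-1)^k, where k = number of vertices of s with label smaller than lab v. *)
Definition Bmat (R : realFieldType) (n : nat) (X : {set {set 'I_n}}) (d : nat)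
  (lab : 'I_n -> 'I_n) (t : simp X d) (s : simp X d.+1) : R :=
  if val t \subset val s then
    match [pick v in val s :\: val t] with
    | Some v => (-1) ^+ #|[set u in val s | (lab u < lab v)%N]|
    | None => 0
    end
  else 0.

Definition bnd (R : realFieldType) (n : nat) (X : {set {set 'I_n}}) (d : nat)
  (lab : 'I_n -> 'I_n) (c : chain R X d.+1) : chain R X d :=
  [ffun t => \sum_(s : simp X d.+1) Bmat R lab t s * c s].

Definition bndT (R : realFieldType) (n : nat) (X : {set {set 'I_n}}) (d : nat)
  (lab : 'I_n -> 'I_n) (c : chain R X d) : chain R X d.+1 :=
  [ffun s => \sum_(t : simp X d) Bmat R lab t s * c t].

(* sgn(A, sigma): A = {i_0 < ... < i_k} (enumerated increasingly by enum_val),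
   tau the permutation with sigma(i_tau(0)) < ... < sigma(i_tau(k)). *)
Definition sgnA (R : realFieldType) (n : nat) (A : {set 'I_n}) (sigma : {perm 'I_n}) : R :=
  match [pick tau : 'S_#|A| |
          [forall a : 'I_#|A|, forall b : 'I_#|A|,
             (a < b)%N ==> (sigma (enum_val (A := A) (tau a))
                            < sigma (enum_val (A := A) (tau b)))%N]] with
  | Some tau => (-1) ^+ odd_perm tau
  | None => 1
  end.

Definition Tsig (R : realFieldType) (n : nat) (X : {set {set 'I_n}}) (d : nat)
  (sigma : {perm 'I_n}) (c : chain R X d) : chain R X d :=
  [ffun s => sgnA R (val s) sigma * c s].

Definition cw_odd (R : realFieldType) (n : nat) (X : {set {set 'I_n}}) (d : nat)
  (F : chain R X d -> chain R X d) : Prop :=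
  exists f : simp X d -> R -> R,
    (forall s x, f s (- x) = - f s x) /\ (forall c s, F c s = f s (c s)).

From HB Require Import structures.
From mathcomp Require Import all_boot all_order all_algebra all_fingroup.
From mathcomp Require Import zify.
Set Implicit Arguments. Unset Strict Implicit. Unset Printing Implicit Defensive.
Import GRing.Theory.
Local Open Scope ring_scope.

(* The relabelling sign sgn(A, sigma) is (-1) to the number of pairs of A
   whose order sigma reverses.  Adding a vertex v to a face t multiplies it by
   (-1) to the number of pairs {v, w}, w in t, reversed by sigma, and this is
   also the parity change of the position of v in s = v |: t when the vertices
   are reordered by sigma.  Hence the relabelled boundary matrix is
   B~(t, s) = sgn(t, sigma) sgn(s, sigma) B(t, s), i.e. B~ = T B T with the
   diagonal sign matrices T, and since these are involutions commuting with
   componentwise odd maps, both identities follow. *)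

Lemma ltn_bump2 h i j : (bump h i < bump h j)%N = (i < j)%N.
Proof. by rewrite !ltnNge leq_bump2. Qed.

Lemma ltn_bumpl h i : (bump h i < h)%N = (i < h)%N.
Proof. by rewrite /bump; case: leqP => /= ?; lia. Qed.

Lemma lift_perm0_decomp k (p : 'S_k.+1) : exists q : 'S_k, p = lift_perm ord0 (p ord0) q.
Proof.
pose q' c := odflt c (unlift (p ord0) (p (lift ord0 c))).
have liftq c : lift (p ord0) (q' c) = p (lift ord0 c).
  rewrite /q'; have := neq_lift ord0 c.
  by rewrite -(can_eq (permK p)) => /unlift_some[c' -> ->].
have q'_inj : injective q'.
  by move=> a b eq_ab; apply/(@lift_inj _ ord0)/(@perm_inj _ p); rewrite -!liftq eq_ab.
exists (perm q'_inj); apply/permP => x.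
case: (unliftP ord0 x) => [c|] ->; last by rewrite lift_perm_id.
by rewrite lift_perm_lift permE liftq.
Qed.

Lemma sorting_perm_exists k (g : 'I_k -> nat) : injective g ->
  exists t : 'S_k, forall a b : 'I_k, (a < b)%N -> (g (t a) < g (t b))%N.
Proof.
move=> g_inj; pose below a := [set b | (g b < g a)%N].
have below_lt a b : (g a < g b)%N -> (#|below a| < #|below b|)%N.
  move=> lt_ab; apply: proper_card; apply/properP.
  split; last by exists a; rewrite !inE ?lt_ab ?ltnn.
  by apply/subsetP => x; rewrite !inE => /ltn_trans; apply.
have rank_lt a : (#|below a| < k)%N.
  rewrite -[X in (_ < X)%N](card_ord k) -cardsT; apply: proper_card; rewrite properT.
  by apply/negP => /eqP below_T; move: (in_setT a); rewrite -below_T inE ltnn.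
pose rank a := Ordinal (rank_lt a).
have rank_inj : injective rank.
  move=> a b /(congr1 val) /= eq_ab; apply: g_inj.
  by case: (ltngtP (g a) (g b)) => // /below_lt; rewrite eq_ab ltnn.
have rankK c : rank ((perm rank_inj)^-1%g c) = c by rewrite -[rank _]permE permKV.
exists (perm rank_inj)^-1%g => a b lt_ab.
case: ltngtP => // [/below_lt | /g_inj/perm_inj eq_ab]; last by rewrite eq_ab ltnn in lt_ab.
by move: (rankK a) (rankK b) => /(congr1 val) /= -> /(congr1 val) /= ->; rewrite ltnNge ltnW.
Qed.

Lemma ltn_enum_val n (A : {set 'I_n}) (i j : 'I_#|A|) :
  (enum_val i < enum_val j)%N = (i < j)%N.
Proof.
have homo (a b : 'I_#|A|) : (a < b)%N -> (enum_val a < enum_val b)%N.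
  have sorted_A : sorted ltn [seq val x | x <- enum A].
    rewrite sorted_map /enum_mem -enumT; apply: sorted_filter; first exact: ltn_trans.
    have : sorted ltn [seq val x | x <- enum 'I_n] by rewrite val_enum_ord iota_ltn_sorted.
    by rewrite sorted_map.
  have size_A (c : 'I_#|A|) : (c < size (enum A))%N by rewrite -cardE.
  move=> lt_ab; have nthE := enum_val_nth (enum_val a).
  rewrite (nthE _ a) (nthE _ b).
  rewrite -(nth_map _ (val (enum_val a)) val (size_A a)).
  rewrite -(nth_map _ (val (enum_val a)) val (size_A b)).
  by apply: (sorted_ltn_nth ltn_trans) => //; rewrite inE size_map.
case: (ltngtP i j) => [/homo -> // | /homo lt_ji | /val_inj ->]; last by rewrite ltnn.
by apply/negbTE; rewrite -leqNgt ltnW.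
Qed.

Definition inversion_sign (R : pzRingType) (T : Type) (f g : T -> nat) (u w : T) : R :=
  (-1) ^+ ((f u < f w)%N && (g w < g u)%N).

Definition sign_inversions (R : comPzRingType) (T : finType) (A : {pred T})
    (f g : T -> nat) : R :=
  \prod_(u in A) \prod_(w in A) inversion_sign R f g u w.

Section SignInversions.

Variable R : comPzRingType.

Lemma prod_sign_card (T : finType) (A : {pred T}) (P : pred T) :
  \prod_(u in A) (-1) ^+ P u = (-1) ^+ #|[set u in A | P u]| :> R.
Proof.
rewrite -prodr_const; under [RHS]eq_bigl do rewrite inE.
by rewrite big_mkcondr; apply: eq_bigr => u _; case: (P u).
Qed.

Lemma sign_inversions_setU1 (T : finType) (v : T) (A : {set T}) (f g : T -> nat) :
  v \notin A ->
  sign_inversions R (v |: A) f g =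
  sign_inversions R A f g *
  \prod_(w in A) (inversion_sign R f g v w * inversion_sign R f g w v).
Proof.
move=> vA; rewrite /sign_inversions.
under eq_bigr => u _ do rewrite big_setU1 //.
rewrite big_setU1 //= big_split /= {1}/inversion_sign ltnn mul1r.
by rewrite big_split /= mulrA mulrC.
Qed.

Lemma sign_inversions_lift0 k (g : 'I_k.+1 -> nat) :
  sign_inversions R 'I_k.+1 val g =
  \prod_(b < k) (-1) ^+ (g (lift ord0 b) < g ord0)%N *
  sign_inversions R 'I_k val (g \o lift ord0).
Proof.
rewrite /sign_inversions big_ord_recl big_ord_recl /inversion_sign /= expr0 mul1r.
congr (_ * _); apply: eq_bigr => a _; rewrite big_ord_recl /= mul1r.
by apply: eq_bigr => b _; rewrite ltn_bump2.
Qed.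

Lemma prod_sign_ltn k (j : nat) : (j <= k)%N ->
  \prod_(c < k) (-1) ^+ (c < j)%N = (-1) ^+ j :> R.
Proof.
move=> le_jk; rewrite -[X in _ = _ ^+ X](card_ord j) -prodr_const.
rewrite (big_ord_widen _ (fun=> -1) le_jk) [RHS]big_mkcond /=.
by apply: eq_bigr => c _; case: ltnP.
Qed.

Lemma odd_perm_inversions k (p : 'S_k) :
  (-1) ^+ p = sign_inversions R 'I_k val (fun a => p a).
Proof.
elim: k p => [|k IHk] p; first by rewrite (permS0 p) odd_perm1 /sign_inversions big_ord0.
have [q ->] := lift_perm0_decomp p; set j := p ord0.
(* The pairs (0, b) contribute exactly j inversions, matching odd_lift_perm. *)
rewrite odd_lift_perm /= signr_addb signr_odd IHk sign_inversions_lift0.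
congr (_ * _); last first.
  apply: eq_bigr => a _; apply: eq_bigr => b _.
  by rewrite /inversion_sign /= !lift_perm_lift /= ltn_bump2.
under eq_bigr do rewrite lift_perm_id lift_perm_lift /= ltn_bumpl.
rewrite (reindex_inj (@perm_inj _ q^-1)) /=.
under eq_bigr do rewrite permKV.
by rewrite prod_sign_ltn // -ltnS.
Qed.

Lemma sorting_perm_sign k (g : 'I_k -> nat) (t : 'S_k) :
  (forall a b : 'I_k, (a < b)%N -> (g (t a) < g (t b))%N) ->
  (-1) ^+ t = sign_inversions R 'I_k val g.
Proof.
move=> t_sorts.
have ltg a b : (g (t b) < g (t a))%N = (b < a)%N.
  case: (ltngtP b a) => [/t_sorts -> // | /t_sorts lt_ab | /val_inj ->]; last by rewrite ltnn.
  by apply/negbTE; rewrite -leqNgt ltnW.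
rewrite -odd_permV odd_perm_inversions /sign_inversions.
have reindex_t := reindex_inj (@perm_inj _ t).
rewrite [LHS]reindex_t [RHS]reindex_t; apply: eq_bigr => a _.
rewrite [LHS]reindex_t [RHS]reindex_t.
by apply: eq_bigr => b _; rewrite /inversion_sign !permK ltg.
Qed.

Lemma rank_sign_relabel (T : finType) (f g : T -> nat)
    (v : T) (A : {set T}) :
  injective f -> injective g -> v \notin A ->
  (-1) ^+ #|[set u in v |: A | (g u < g v)%N]| =
  (-1) ^+ #|[set u in v |: A | (f u < f v)%N]| *
  \prod_(w in A) (inversion_sign R f g v w * inversion_sign R f g w v) :> R.
Proof.
move=> f_inj g_inj vA; rewrite -!prod_sign_card !big_setU1 //= !ltnn !expr0 !mul1r.
rewrite -big_split; apply: eq_bigr => w wA /=.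
have wv : w != v by apply: contraNneq vA => <-.
have fwv : f w != f v by rewrite (inj_eq f_inj).
have gwv : g w != g v by rewrite (inj_eq g_inj).
rewrite /inversion_sign -!signr_addb; congr (_ ^+ _).
by case: (ltngtP (f w) (f v)) fwv => // _ _; case: (ltngtP (g w) (g v)) gwv.
Qed.

End SignInversions.

Section Relabelling.

Variables (R : realFieldType) (n : nat) (sigma : {perm 'I_n}).

Lemma sgnAE (A : {set 'I_n}) :
  sgnA R A sigma = sign_inversions R A val (fun u => sigma u).
Proof.
pose g a := val (sigma (enum_val (A := A) a)).
have -> : sign_inversions R A val (fun u => sigma u) = sign_inversions R 'I_#|A| val g.
  rewrite /sign_inversions big_enum_val; apply: eq_bigr => a _.
  by rewrite big_enum_val; apply: eq_bigr => b _; rewrite /inversion_sign ltn_enum_val.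
rewrite /sgnA; case: pickP => [t /forallP t_sorts | no_sort].
  by apply: sorting_perm_sign => a b; move/forallP/(_ b)/implyP: (t_sorts a).
have g_inj : injective g by move=> a b /val_inj/perm_inj/enum_val_inj.
have [t t_sorts] := sorting_perm_exists g_inj.
have /negbT/negP[] := no_sort t.
by apply/forallP => a; apply/forallP => b; apply/implyP; apply: t_sorts.
Qed.

Lemma sgnA_signr (A : {set 'I_n}) : exists b : bool, sgnA R A sigma = (-1) ^+ b.
Proof. by rewrite /sgnA; case: pickP => [t _ | _]; [exists (odd_perm t) | exists false]. Qed.

Lemma sgnA_mul_self (A : {set 'I_n}) : sgnA R A sigma * sgnA R A sigma = 1.
Proof. by have [[] ->] := sgnA_signr A; rewrite ?mulrNN mulr1. Qed.

Lemma sgnA_setU1 (v : 'I_n) (A : {set 'I_n}) : v \notin A ->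
  sgnA R (v |: A) sigma =
  sgnA R A sigma * \prod_(w in A)
    (inversion_sign R val (fun u => sigma u) v w * inversion_sign R val (fun u => sigma u) w v).
Proof. by move=> vA; rewrite !sgnAE sign_inversions_setU1. Qed.

Lemma Bmat_relabel (X : {set {set 'I_n}}) d (t : simp X d) (s : simp X d.+1) :
  Bmat R (fun v => sigma v) t s = sgnA R (val t) sigma * sgnA R (val s) sigma * Bmat R id t s.
Proof.
rewrite /Bmat; case: ifP => sub_ts; last by rewrite mulr0.
case: pickP => [v | _]; last by rewrite mulr0.
rewrite inE => /andP[vt vs].
have s_eq : val s = v |: val t.
  have /andP[_ /eqP card_t] := valP t; have /andP[_ /eqP card_s] := valP s.
  apply/esym/eqP; rewrite eqEcard subUset sub1set vs sub_ts cardsU1 vt card_t card_s.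
  by rewrite add1n ltnSn.
have sigma_inj : injective (fun u : 'I_n => val (sigma u)) by move=> a b /val_inj/perm_inj.
rewrite s_eq sgnA_setU1 // mulrA sgnA_mul_self mul1r.
by rewrite (rank_sign_relabel R val_inj sigma_inj vt) mulrC.
Qed.

Variables (X : {set {set 'I_n}}) (d : nat).

Lemma bnd_Tsig (c : chain R X d.+1) :
  bnd (fun v => sigma v) (Tsig sigma c) = Tsig sigma (bnd id c).
Proof.
apply/ffunP => t; rewrite !ffunE big_distrr /=; apply: eq_bigr => s _.
rewrite ffunE Bmat_relabel -!mulrA; congr (_ * _).
by rewrite mulrCA (mulrA (sgnA _ _ _)) sgnA_mul_self mul1r.
Qed.

Lemma bndT_Tsig (c : chain R X d) :
  bndT (fun v => sigma v) (Tsig sigma c) = Tsig sigma (bndT id c).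
Proof.
apply/ffunP => s; rewrite !ffunE big_distrr /=; apply: eq_bigr => t _.
rewrite ffunE Bmat_relabel [sgnA _ (val t) _ * _]mulrC -!mulrA; congr (_ * _).
by rewrite mulrCA (mulrA (sgnA _ _ _)) sgnA_mul_self mul1r.
Qed.

Lemma cw_odd_Tsig (F : chain R X d -> chain R X d) :
  cw_odd F -> forall c, F (Tsig sigma c) = Tsig sigma (F c).
Proof.
case=> f [f_odd F_E] c; apply/ffunP => s; rewrite !ffunE !F_E ffunE.
by have [[] ->] := sgnA_signr (val s); rewrite ?expr0 ?expr1 !(mul1r, mulN1r) ?f_odd.
Qed.

End Relabelling.

Theorem mainTheorem2 (R : realFieldType) (n : nat) (X : {set {set 'I_n}})
  (hX : is_complex X) (sigma : {perm 'I_n}) (d : nat)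
  (F : chain R X d.+1 -> chain R X d.+1) (H : chain R X d -> chain R X d) :
  cw_odd F -> cw_odd H ->
  (forall x : chain R X d,
     Tsig sigma (bnd id (F (bndT id x)))
     = bnd (fun v => sigma v) (F (bndT (fun v => sigma v) (Tsig sigma x)))) /\
  (forall y : chain R X d.+1,
     Tsig sigma (bndT id (H (bnd id y)))
     = bndT (fun v => sigma v) (H (bnd (fun v => sigma v) (Tsig sigma y)))).
Proof.
move=> F_odd H_odd; split => c.
  by rewrite bndT_Tsig (cw_odd_Tsig sigma F_odd) bnd_Tsig.
by rewrite bnd_Tsig (cw_odd_Tsig sigma H_odd) bndT_Tsig.
Qed.
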